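(* Let $(M,\cdot,1)$ be a monoid, $\Sigma$ a finite alphabet, and $\ell:\Sigma^*\to M$ an $M$-language. If there exists a factorization $(g,f)$ on $L$ such that the right congruence $\equiv^{(g,f)}_\ell$ on $\Sigma^*$ has finite index, then $\ell$ is a recognizable $M$-language.
   Context: $L$ is the set of all functions $\Sigma^*\to M$; $\varepsilon$ is the empty word. A factorization on $L$ is a pair $(g,f)$ of functions $g:L\to M$, $f:L\to L$ with $g(\ell)\cdot f(\ell)=\ell$ for all $\ell\in L$, where $(m\cdot\ell)(\gamma)=m\cdot\ell(\gamma)$. For a word $\alpha$, $\Delta_\alpha:L\to L$ is $\Delta_\alpha(\ell)(\gamma)=\ell(\alpha\gamma)$. Define $S^{(g,f)}_\varepsilon$ as the identity on $L$ and $S^{(g,f)}_{\alpha\sigma}=f\circ\Delta_\sigma\circ S^{(g,f)}_\alpha$ for $\sigma\in\Sigma$. The relation $\equiv^{(g,f)}_\ell$ is defined by $\alpha\equiv^{(g,f)}_\ell\beta\iff S^{(g,f)}_\alpha(\ell)=S^{(g,f)}_\beta(\ell)$; finite index means finitely many classes. An $M$-DFA is a tuple $(Q,\Sigma,u,i_u,\delta,w,\rho)$ with $Q$ finite nonempty, initial state $u$, initial value $i_u\in M$, $\delta:Q\times\Sigma\to Q$, $w:Q\times\Sigma\to M$, $\rho:Q\to M$; with $q\alpha$ the extended transition and $w^*(q,\varepsilon)=1$, $w^*(q,\alpha\sigma)=w^*(q,\alpha)\cdot w(q\alpha,\sigma)$, it recognizes $\alpha\mapsto i_u\cdot w^*(u,\alpha)\cdot\rho(u\alpha)$.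 Recognizable means recognized by some $M$-DFA. *)

From mathcomp Require Import all_boot.
Set Implicit Arguments. Unset Strict Implicit. Unset Printing Implicit Defensive.

Record is_monoid (M : Type) (op : M -> M -> M) (one : M) : Prop := {
  monoid_assoc : forall a b c, op a (op b c) = op (op a b) c;
  monoid_left_id : forall a, op one a = a;
  monoid_right_id : forall a, op a one = a }.

Section MLang.
Variables (Sigma : finType) (M : Type) (op : M -> M -> M) (one : M).

(* L = all functions Sigma^* -> M; words are seq Sigma, epsilon = [::]. *)
Definition lang := seq Sigma -> M.

Definition lscale (m : M) (l : lang) : lang := fun gamma => op m (l gamma).

Definition is_factorization (g : lang -> M) (f : lang -> lang) : Prop :=
  forall l : lang, lscale (g l) (f l) = l.

Definition Delta (alpha : seq Sigma) (l : lang) : lang :=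
  fun gamma => l (alpha ++ gamma).

(* S_eps = id, S_{alpha sigma} = f o Delta_sigma o S_alpha *)
Fixpoint S_rev (f : lang -> lang) (ra : seq Sigma) : lang -> lang :=
  match ra with
  | [::] => id
  | s :: ra' => fun l => f (Delta [:: s] (S_rev f ra' l))
  end.
Definition S_fac (f : lang -> lang) (alpha : seq Sigma) : lang -> lang :=
  S_rev f (rev alpha).

Definition fac_equiv (f : lang -> lang) (l : lang) (a b : seq Sigma) : Prop :=
  S_fac f a l = S_fac f b l.

Definition finite_index (R : seq Sigma -> seq Sigma -> Prop) : Prop :=
  exists reps : seq (seq Sigma), forall a, exists2 r, r \in reps & R a r.

Record MDFA := {
  Q : finType;
  q0 : Q;
  init_val : M;
  delta : Q -> Sigma -> Q;
  wt : Q -> Sigma -> M;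
  rho : Q -> M }.

Fixpoint ext_delta {A : MDFA} (q : Q A) (alpha : seq Sigma) : Q A :=
  match alpha with
  | [::] => q
  | s :: a => ext_delta (delta q s) a
  end.

(* w^*(q, eps) = 1, w^*(q, alpha sigma) = w^*(q,alpha) . w(q alpha, sigma),
   literally, by recursion on the reversed word. *)
Fixpoint wstar_rev {A : MDFA} (q : Q A) (ra : seq Sigma) : M :=
  match ra with
  | [::] => one
  | s :: ra' => op (wstar_rev q ra') (wt (ext_delta q (rev ra')) s)
  end.
Definition wstar {A : MDFA} (q : Q A) (alpha : seq Sigma) : M :=
  wstar_rev q (rev alpha).

Definition mdfa_lang (A : MDFA) : lang :=
  fun alpha => op (op (init_val A) (wstar (q0 A) alpha))
                  (rho (ext_delta (q0 A) alpha)).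

Definition recognizable (l : lang) : Prop := exists A : MDFA, mdfa_lang A = l.

End MLang.

(* The state reached after reading α is (the index of the class of) the
   residual S_α(ℓ); finite index makes the state set finite.  Reading σ in
   state S_α(ℓ) outputs g(Δ_σ S_α(ℓ)) and moves to f(Δ_σ S_α(ℓ)) = S_ασ(ℓ);
   since g(k)·f(k) = k, the outputs along α followed by S_α(ℓ) reassemble ℓ:
   ℓ(αγ) = w(α) · S_α(ℓ)(γ), and γ = ε gives ℓ(α) = w(α) · ρ(S_α(ℓ)). *)
From Stdlib Require Import ClassicalEpsilon FunctionalExtensionality.
From mathcomp Require Import all_boot.

Set Implicit Arguments. Unset Strict Implicit. Unset Printing Implicit Defensive.

Section MDFARuns.
Variables (Sigma : finType) (M : Type) (op : M -> M -> M) (one : M).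
Variable A : MDFA Sigma M.

Lemma ext_delta_rcons (q : Q A) a s :
  ext_delta q (rcons a s) = delta (ext_delta q a) s.
Proof. by elim: a q => [|x a IH] q //=. Qed.

Lemma wstar_rcons (q : Q A) a s :
  wstar op one q (rcons a s) = op (wstar op one q a) (wt (ext_delta q a) s).
Proof. by rewrite /wstar rev_rcons /= revK. Qed.

End MDFARuns.

Lemma S_fac_rcons (Sigma : finType) (M : Type) (f : lang Sigma M -> lang Sigma M)
    a s l :
  S_fac f (rcons a s) l = f (Delta [:: s] (S_fac f a l)).
Proof. by rewrite /S_fac rev_rcons. Qed.

Lemma finite_index_class (T : eqType) (R : seq T -> seq T -> Prop) reps :
  (forall a, exists2 r, r \in reps & R a r) ->
  exists cls : seq T -> 'I_(size reps), forall a, R a (nth [::] reps (cls a)).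
Proof.
move=> Hreps.
have Hcls a : exists i : 'I_(size reps), R a (nth [::] reps i).
  have [r r_reps Rar] := Hreps a.
  by exists (Ordinal (etrans (index_mem r reps) r_reps)); rewrite nth_index.
exists (fun a => proj1_sig (constructive_indefinite_description _ (Hcls a))).
by move=> a; exact: proj2_sig (constructive_indefinite_description _ (Hcls a)).
Qed.

Section Factorization.
Variables (Sigma : finType) (M : Type) (op : M -> M -> M) (one : M).
Hypothesis Hmon : is_monoid op one.
Variables (g : lang Sigma M -> M) (f : lang Sigma M -> lang Sigma M).
Hypothesis Hfac : is_factorization op g f.
Variable l : lang Sigma M.

Fixpoint fac_weight_rev (ra : seq Sigma) : M :=
  match ra with
  | [::] => one
  | s :: ra' => op (fac_weight_rev ra') (g (Delta [:: s] (S_rev f ra' l)))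
  end.
Definition fac_weight (a : seq Sigma) : M := fac_weight_rev (rev a).

Lemma fac_weight_rcons a s :
  fac_weight (rcons a s) = op (fac_weight a) (g (Delta [:: s] (S_fac f a l))).
Proof. by rewrite /fac_weight /S_fac rev_rcons. Qed.

Lemma lang_cat_fac a c : l (a ++ c) = op (fac_weight a) (S_fac f a l c).
Proof.
elim/last_ind: a c => [|a s IH] c; first by rewrite (monoid_left_id Hmon).
rewrite fac_weight_rcons -(monoid_assoc Hmon) S_fac_rcons.
rewrite -cats1 -catA IH; congr (op _ _).
by have /(congr1 (fun k => k c)) := Hfac (Delta [:: s] (S_fac f a l)).
Qed.

Variables (reps : seq (seq Sigma)) (cls : seq Sigma -> 'I_(size reps)).
Hypothesis clsP : forall a, fac_equiv f l a (nth [::] reps (cls a)).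

Definition residual (i : 'I_(size reps)) : lang Sigma M :=
  S_fac f (nth [::] reps i) l.

Definition fac_dfa : MDFA Sigma M := {|
  Q := 'I_(size reps);
  q0 := cls [::];
  init_val := one;
  delta := fun i s => cls (rcons (nth [::] reps i) s);
  wt := fun i s => g (Delta [:: s] (residual i));
  rho := fun i => residual i [::] |}.

Lemma residual_fac_dfa a :
  residual (@ext_delta _ _ fac_dfa (cls [::]) a) = S_fac f a l.
Proof.
elim/last_ind: a => [|a s IH]; first by rewrite /residual -clsP.
by rewrite ext_delta_rcons /residual /= -clsP !S_fac_rcons -IH.
Qed.

Lemma wstar_fac_dfa a : @wstar _ _ op one fac_dfa (cls [::]) a = fac_weight a.
Proof.
elim/last_ind: a => [//|a s IH].
by rewrite wstar_rcons fac_weight_rcons IH /= residual_fac_dfa.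
Qed.

Lemma mdfa_lang_fac_dfa : mdfa_lang op one fac_dfa = l.
Proof.
apply: functional_extensionality => a.
rewrite /mdfa_lang /= (monoid_left_id Hmon) wstar_fac_dfa residual_fac_dfa.
by rewrite -lang_cat_fac cats0.
Qed.

End Factorization.

Theorem corollary1 (M : Type) (op : M -> M -> M) (one : M)
  (Hmon : is_monoid op one) (Sigma : finType) (l : lang Sigma M) :
  (exists (g : lang Sigma M -> M) (f : lang Sigma M -> lang Sigma M),
      is_factorization op g f /\ finite_index (fac_equiv f l)) ->
  recognizable op one l.
Proof.
move=> [g [f [Hfac [reps Hreps]]]].
have [cls clsP] := finite_index_class Hreps.
by exists (fac_dfa one g f l cls); exact: mdfa_lang_fac_dfa.
Qed.
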